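(* Let $(X,\Sigma,\mu)$ be a measure space with a non-negative (not necessarily probability) measure $\mu$, let $K$ be a compact space, and let $f,g\colon X\to K$ be simple measurable functions. If $f\neq g$ $\mu$-almost everywhere, then there exists $L\in\Sigma$ such that $\mu(L)\ge\mu(X)/4$ and $f[L]\cap g[L]=\emptyset$.
   Context: A simple measurable function is a measurable function taking only finitely many values. *)

From HB Require Import structures.
From mathcomp Require Import all_boot all_order all_algebra.
From mathcomp Require Import all_classical all_reals all_analysis.
Set Implicit Arguments. Unset Strict Implicit. Unset Printing Implicit Defensive.
Import Order.TTheory GRing.Theory Num.Theory.
Local Open Scope classical_set_scope.

Definition simple_measurable (d : measure_display) (T : measurableType d)
  (K : Type) (f : T -> K) : Prop :=
  finite_set (range f) /\ (forall y : K, measurable (f @^-1` [set y])).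

From mathcomp Require Import all_boot all_order all_algebra.
From mathcomp Require Import all_classical all_reals all_analysis.
From mathcomp Require Import measurable_realfun.
Set Implicit Arguments.
Unset Strict Implicit.
Unset Printing Implicit Defensive.
Import Order.TTheory GRing.Theory Num.Theory.
Local Open Scope classical_set_scope.
Local Open Scope ring_scope.

(* Colour the finitely many values of f and g at random, and let L_c be the
   set of points x with c (f x) = true and c (g x) = false; then f[L_c] and
   g[L_c] are disjoint by construction.  A point x with f x <> g x lies in
   L_c for exactly a quarter of all colourings c, so integrating over mu and
   averaging over c gives a colouring with mu(L_c) >= mu(X)/4. *)

Lemma card_colourings_true_false (I : finType) (i j : I) : i != j ->
  (4 * #|[set c : {ffun I -> bool} | c i && ~~ c j]%SET| = 2 ^ #|I|)%N.
Proof.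
move=> neq_ij.
pose F m :=
  if m == i then pred1 true else if m == j then pred1 false else predT.
have -> : [set c : {ffun I -> bool} | c i && ~~ c j]%SET =
          [set c in family F]%SET.
  apply/setP => c; rewrite !inE; apply/andP/familyP => [[ci ncj] m|cF].
    rewrite /F; case: eqP => [->|_]; first by rewrite inE ci.
    by case: eqP => [->|//]; rewrite inE (negbTE ncj).
  have := cF i; have := cF j.
  by rewrite /F eqxx eq_sym (negbTE neq_ij) eqxx !inE => /eqP -> /eqP ->.
rewrite cardsE card_family foldrE big_image /= -prod_nat_const.
rewrite (bigD1 i) //= [RHS](bigD1 i) //= (bigD1 j) 1?eq_sym //=.
rewrite [in RHS](bigD1 j) 1?eq_sym //= /F eqxx eq_sym (negbTE neq_ij) eqxx.
rewrite !card1 !mul1n mulnA; congr (_ * _)%N.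
by apply: eq_bigr => m /andP[/negbTE -> /negbTE ->]; rewrite card_bool.
Qed.

Lemma exists_sum_le_card_mul (R : realDomainType) (C : finType) (c0 : C)
    (F : C -> \bar R) :
  exists c, (\sum_(c' : C) F c' <= #|C|%:R%:E * F c)%E.
Proof.
pose cmax := [arg max_(c > c0) F c]%O.
have le_max : (\sum_(c : C) F c <= \sum_(c : C) F cmax)%E.
  by apply: lee_sum => c _; rewrite /cmax; case: arg_maxP => // c1 _; apply.
by exists cmax; rewrite mule_natl; rewrite sumr_const in le_max.
Qed.

Definition cut_set {T I : Type} (a b : T -> I) (c : I -> bool) : set T :=
  [set x | c (a x) && ~~ c (b x)].

Lemma cut_set_images_disjoint (T I K : Type) (idx : K -> I) (f g : T -> K)
    (c : I -> bool) :
  let L := cut_set (idx \o f) (idx \o g) c in f @` L `&` g @` L = set0.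
Proof.
apply/seteqP; split => // y [[x /andP[cfx _] <-]].
by case=> x' /andP[_]; rewrite /= => + gx'; rewrite gx' cfx.
Qed.

Lemma sum_indic_cut_set (R : ringType) (T : Type) (I : finType)
    (a b : T -> I) (x : T) :
  \sum_(c : {ffun I -> bool}) \1_(cut_set a b c) x =
    #|[set c : {ffun I -> bool} | c (a x) && ~~ c (b x)]%SET|%:R :> R.
Proof.
rewrite -sum1_card natr_sum [RHS]big_mkcond /=; apply: eq_bigr => c _.
rewrite inE indicE; case: ifPn => [cut|/negP ncut].
  by rewrite mem_set.
by rewrite memNset.
Qed.

Section Averaging.
Context (d : measure_display) (T : measurableType d) (R : realType).
Context (mu : {measure set T -> \bar R}).
Local Open Scope ereal_scope.

Lemma le_sum_measure_ae (C : finType) (A : C -> set T) (k : R) :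
  (forall c, measurable (A c)) -> (0 <= k)%R ->
  {ae mu, forall x, (k <= \sum_c \1_(A c) x)%R} ->
  k%:E * mu setT <= \sum_c mu (A c).
Proof.
move=> mA k_ge0 ae_k.
have mIA c : measurable_fun setT (EFin \o (\1_(A c) : T -> R)).
  by apply/measurable_EFinP; apply: measurable_indic.
have -> : \sum_c mu (A c) = \int[mu]_x \sum_c (\1_(A c) x)%:E.
  rewrite ge0_integral_sum //; apply: eq_bigr => c _.
  by rewrite integral_indic // setIT.
rewrite -integral_cst //; apply: ae_ge0_le_integral => //.
- by move=> x _; apply: sume_ge0 => c _; rewrite lee_fin.
- by apply: emeasurable_sum => c; apply: mIA.
- by apply: filterS ae_k => x kx _; rewrite sumEFin lee_fin.
Qed.

Lemma exists_cut_set_quarter (I : finType) (a b : T -> I) :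
  (forall P, measurable (a @^-1` P)) -> (forall P, measurable (b @^-1` P)) ->
  {ae mu, forall x, a x <> b x} ->
  exists c : {ffun I -> bool},
    measurable (cut_set a b c) /\ mu setT * (4^-1)%:E <= mu (cut_set a b c).
Proof.
move=> ma mb ae_neq.
have mcut (c : {ffun I -> bool}) : measurable (cut_set a b c).
  have -> : cut_set a b c = a @^-1` [set i | c i] `&` b @^-1` [set i | ~~ c i].
    by apply/seteqP; split => x /andP.
  exact: measurableI.
pose N : R := (2 ^ #|I|)%:R.
have N_gt0 : (0 < N)%R by rewrite ltr0n expn_gt0.
have quarter x : a x <> b x ->
    (N / 4 <= \sum_(c : {ffun I -> bool}) \1_(cut_set a b c) x)%R.
  move=> /eqP neq_ab; rewrite sum_indic_cut_set /N.
  rewrite -(card_colourings_true_false neq_ab) natrM mulrAC.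
  by rewrite divff ?mul1r ?pnatr_eq0.
have le_sum :
    (N / 4)%:E * mu setT <= \sum_(c : {ffun I -> bool}) mu (cut_set a b c).
  apply: le_sum_measure_ae => //; first by rewrite divr_ge0 // ltW.
  exact: filterS quarter ae_neq.
have [c le_avg] := exists_sum_le_card_mul [ffun=> false] (mu \o cut_set a b).
exists c; split => //.
move: (le_trans le_sum le_avg); rewrite card_ffun card_bool -/N.
by rewrite EFinM muleAC -muleA lee_pmul2l ?lte_fin // muleC.
Qed.

End Averaging.

Lemma simple_measurable_preimage (d : measure_display) (T : measurableType d)
    (K : Type) (f : T -> K) (P : set K) :
  simple_measurable f -> measurable (f @^-1` P).
Proof.
case=> fin_f mf.
have -> : f @^-1` P = \bigcup_(y in range f `&` P) f @^-1` [set y].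
  apply/seteqP; split => [x Pfx|x [y [_ Py] /= ->] //].
  by exists (f x) => //; split => //; exists x.
by apply: fin_bigcup_measurable => //; apply: finite_setIl.
Qed.

Theorem proposition7p7 (d : measure_display) (T : measurableType d)
  (R : realType) (mu : {measure set T -> \bar R})
  (K : topologicalType) (hK : compact [set: K])
  (f g : T -> K) (hf : simple_measurable f) (hg : simple_measurable g)
  (hfg : {ae mu, forall x, f x <> g x}) :
  exists L : set T, measurable L /\
    (mu [set: T] * (4%:R^-1)%:E <= mu L)%E /\
    f @` L `&` g @` L = set0.
Proof.
have [s def_s] : exists s : seq K, range f `|` range g = [set` s].
  by apply/finite_seqP; rewrite finite_setU; split; [case: hf|case: hg].
pose idx y : 'I_(size s).+1 := inord (index y s).
have idx_inj y y' : y \in s -> idx y = idx y' -> y = y'.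
  move=> s_y /(congr1 (@nat_of_ord _)).
  rewrite !inordK ?ltnS ?index_size // => eq_index.
  have s_y' : y' \in s by rewrite -index_mem -eq_index index_mem.
  by rewrite -(nth_index y s_y) eq_index nth_index.
have ae_idx_neq : {ae mu, forall x, idx (f x) <> idx (g x)}.
  apply: filterS hfg => x neq_fg /idx_inj eq_fg; apply: neq_fg; apply: eq_fg.
  have s_fx : [set` s] (f x) by rewrite -def_s; left; exists x.
  exact: s_fx.
have [c [mL leL]] := exists_cut_set_quarter
  (fun P => simple_measurable_preimage (idx @^-1` P) hf)
  (fun P => simple_measurable_preimage (idx @^-1` P) hg) ae_idx_neq.
by exists (cut_set (idx \o f) (idx \o g) c); split=> //; split=> //;
  apply: cut_set_images_disjoint.
Qed.
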